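(* Suppose the representation has a single equivalence class $h$ of irreducible components, with multiplicity $m_h\ge1$, so $\mathcal H=\mathcal H_h\otimes\mathbb C^{m_h}$ and $\mathcal C=\{\Xi\ge0:\operatorname{Tr}_{\mathcal H_h}(\Xi)=d_{\mathcal H_h}I_{m_h}\}$. Let $\Xi\in\mathcal C$ and write $\Xi=\sum_{i=1}^r|w_i\rangle\langle w_i|$ with $r=\operatorname{rank}\Xi$ and $\{|w_i\rangle\}$ mutually orthogonal nonzero vectors (spectral decomposition with eigenvalues absorbed). Fix an orthonormal basis $\{|l\rangle\}$ of $\mathcal H_h$ and define $W_i\in\mathcal B(\mathcal H_h,\mathbb C^{m_h})$ by $|w_i\rangle=\sum_l|l\rangle\otimes W_i|l\rangle$. Then $\Xi$ is extremal in $\mathcal C$ if and only if the operators $\{W_iW_j^\dagger\}_{i,j=1}^r\subseteq\mathcal B(\mathbb C^{m_h})$ are linearly independent. In particular, every extremal $\Xi$ has $\operatorname{rank}(\Xi)\le m_h$.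
   Context: Let $G$ be a group with a unitary representation $g\mapsto U_g$ on a finite-dimensional Hilbert space $\mathcal H$ which is a multiple of a single irreducible representation: $\mathcal H=\mathcal H_h\otimes\mathbb C^{m_h}$, $U_g=U^{(h)}_g\otimes I_{m_h}$ with $U^{(h)}$ irreducible on $\mathcal H_h$; $d_{\mathcal H_h}=\dim\mathcal H_h$ and $\operatorname{Tr}_{\mathcal H_h}$ is the partial trace over $\mathcal H_h$. $\mathcal C$ is the convex set of seeds $\Xi$ of covariant POVMs $dP_g=U_g^\dagger\Xi U_g\,dg$. *)

From HB Require Import structures.
From mathcomp Require Import all_boot all_order all_algebra.
Set Implicit Arguments. Unset Strict Implicit. Unset Printing Implicit Defensive.
Import Order.TTheory GRing.Theory Num.Theory.
Local Open Scope ring_scope.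

(* Complex scalars: any numeric closed field C (e.g. complex R for R real closed). *)
(* Hilbert space H = H_h (x) C^m with dim H_h = d; the basis vector |l> (x) |a>
   is indexed by mxvec_index l a : 'I_(d * m). *)

Definition adjmx (C : numClosedFieldType) (p q : nat) (A : 'M[C]_(p, q)) : 'M[C]_(q, p) :=
  (map_mx Num.conj A)^T.

Definition psd (C : numClosedFieldType) (n : nat) (A : 'M[C]_n) : Prop :=
  adjmx A = A /\ forall v : 'cV[C]_n, 0 <= (adjmx v *m A *m v) 0 0.

Definition ptrace_h (C : numClosedFieldType) (d m : nat) (X : 'M[C]_(d * m)) : 'M[C]_m :=
  \matrix_(a < m, b < m) \sum_(l < d) X (mxvec_index l a) (mxvec_index l b).

Definition seeds (C : numClosedFieldType) (d m : nat) (X : 'M[C]_(d * m)) : Prop :=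
  psd X /\ ptrace_h X = (d%:R : C)%:M.

Definition extremal (C : numClosedFieldType) (d m : nat) (X : 'M[C]_(d * m)) : Prop :=
  seeds X /\
  forall (X1 X2 : 'M[C]_(d * m)) (t : C), seeds X1 -> seeds X2 -> 0 < t < 1 ->
    X = t *: X1 + (1 - t) *: X2 -> X1 = X /\ X2 = X.

(* W_i : H_h -> C^m defined by |w> = sum_l |l> (x) W |l> *)
Definition Wop (C : numClosedFieldType) (d m : nat) (w : 'cV[C]_(d * m)) : 'M[C]_(m, d) :=
  \matrix_(a < m, l < d) w (mxvec_index l a) 0.

Definition lin_indep (C : numClosedFieldType) (I : finType) (p q : nat)
  (F : I -> 'M[C]_(p, q)) : Prop :=
  forall c : I -> C, \sum_(k : I) c k *: F k = 0 -> forall k, c k = 0.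

From HB Require Import structures.
From mathcomp Require Import all_boot all_order all_algebra.
Import Order.TTheory GRing.Theory Num.Theory.
Local Open Scope ring_scope.
Set Implicit Arguments. Unset Strict Implicit. Unset Printing Implicit Defensive.

(* A seed that
   occurs in a proper convex decomposition of X vanishes on ker X, hence is a
   combination sum_ij c_ij |w_i><w_j|; conversely, for every hermitian such
   combination Y, the matrices X +- eps Y stay positive for small eps.  As
   Tr_{H_h} sum_ij c_ij |w_i><w_j| = sum_ij c_ij W_i W_j^+, the seed condition on
   these perturbations is exactly a linear relation among the W_i W_j^+, whence
   the equivalence.  Independence of r^2 matrices of size m_h then gives
   r <= m_h. *)

Section Adjoint.
Variable C : numClosedFieldType.

Lemma adjmxE p q (A : 'M[C]_(p, q)) i j : adjmx A i j = (A j i)^*.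
Proof. by rewrite !mxE. Qed.

Lemma adjmx_is_nmod_morphism p q : nmod_morphism (@adjmx C p q).
Proof. by split=> [|A B]; apply/matrixP => i j; rewrite !mxE ?rmorph0 ?rmorphD. Qed.

HB.instance Definition _ p q :=
  GRing.isNmodMorphism.Build 'M[C]_(p, q) 'M[C]_(q, p) (@adjmx C p q)
    (adjmx_is_nmod_morphism p q).

Lemma adjmxK p q (A : 'M[C]_(p, q)) : adjmx (adjmx A) = A.
Proof. by apply/matrixP => i j; rewrite !adjmxE conjCK. Qed.

Lemma adjmxM p q r (A : 'M[C]_(p, q)) (B : 'M[C]_(q, r)) :
  adjmx (A *m B) = adjmx B *m adjmx A.
Proof.
apply/matrixP => i j; rewrite !mxE rmorph_sum; apply: eq_bigr => k _.
by rewrite !mxE rmorphM mulrC.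
Qed.

Lemma adjmx_trmxC p q (A : 'M[C]_(p, q)) : adjmx A = map_mx Num.conj A^T.
Proof. exact: map_trmx. Qed.

Lemma adjmxZ p q (a : C) (A : 'M[C]_(p, q)) : adjmx (a *: A) = a^* *: adjmx A.
Proof. by apply/matrixP => i j; rewrite !mxE rmorphM. Qed.

End Adjoint.

Section PartialTrace.
Variables (C : numClosedFieldType) (d m : nat).

Lemma ptrace_h_is_linear : linear (@ptrace_h C d m).
Proof.
move=> a A B; apply/matrixP => i j; rewrite !mxE mulr_sumr -big_split.
by apply: eq_bigr => l _; rewrite !mxE.
Qed.

HB.instance Definition _ :=
  GRing.isLinear.Build C 'M[C]_(d * m) 'M[C]_m _ (@ptrace_h C d m) ptrace_h_is_linear.

Lemma ptrace_adjmx (A : 'M[C]_(d * m)) : ptrace_h (adjmx A) = adjmx (ptrace_h A).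
Proof.
apply/matrixP => a b; rewrite !mxE rmorph_sum; apply: eq_bigr => l _.
by rewrite !mxE.
Qed.

Lemma ptrace_outer (w v : 'cV[C]_(d * m)) :
  ptrace_h (w *m adjmx v) = Wop w *m adjmx (Wop v).
Proof.
apply/matrixP => a b; rewrite !mxE; apply: eq_bigr => l _.
by rewrite !mxE big_ord1 !mxE.
Qed.

End PartialTrace.

Section InnerProduct.
Variables (C : numClosedFieldType) (n : nat).
Implicit Types (u v : 'cV[C]_n) (A : 'M[C]_n).

Definition inner u v : C := (adjmx u *m v) 0 0.

Definition qform A v : C := (adjmx v *m A *m v) 0 0.

Lemma innerE u v : inner u v = \sum_k (u k 0)^* * v k 0.
Proof. by rewrite /inner mxE; apply: eq_bigr => k _; rewrite adjmxE. Qed.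

Lemma conj_inner u v : (inner u v)^* = inner v u.
Proof. by rewrite /inner -adjmxE adjmxM adjmxK. Qed.

Lemma inner_eq0 u : (inner u u == 0) = (u == 0).
Proof.
apply/idP/idP => [|/eqP->]; last by rewrite /inner mulmx0 mxE.
have F0 k : 0 <= (u k 0)^* * u k 0 by rewrite -normCKC exprn_ge0.
rewrite innerE => /eqP /(psumr_eq0P (fun k _ => F0 k)) u0.
apply/eqP/matrixP => k j; rewrite ord1 mxE.
by move/eqP: (u0 k isT); rewrite -normCKC sqrf_eq0 normr_eq0 => /eqP.
Qed.

Lemma adjmx_mul_cV u v : adjmx u *m v = (inner u v)%:M.
Proof. exact: mx11_scalar. Qed.

Lemma inner_outer u x y v : (adjmx u *m (x *m adjmx y) *m v) 0 0 = inner u x * inner y v.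
Proof. by rewrite mulmxA -mulmxA mxE big_ord1. Qed.

Lemma qform_outer u u' v : qform (u *m adjmx u') v = (inner u v)^* * inner u' v.
Proof. by rewrite conj_inner /qform inner_outer. Qed.

Lemma outer_sandwich u v A :
  (u *m adjmx u) *m A *m (v *m adjmx v) = (adjmx u *m A *m v) 0 0 *: (u *m adjmx v).
Proof.
have -> : u *m adjmx u *m A *m (v *m adjmx v) = u *m (adjmx u *m A *m v) *m adjmx v.
  by rewrite !mulmxA.
by rewrite {1}[adjmx u *m A *m v]mx11_scalar mul_mx_scalar -scalemxAl.
Qed.

Lemma qformD A B v : qform (A + B) v = qform A v + qform B v.
Proof. by rewrite /qform mulmxDr mulmxDl mxE. Qed.

Lemma qformZ a A v : qform (a *: A) v = a * qform A v.
Proof. by rewrite /qform -scalemxAr -scalemxAl mxE. Qed.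

Lemma qform_sum (I : finType) (F : I -> 'M[C]_n) v :
  qform (\sum_i F i) v = \sum_i qform (F i) v.
Proof. by rewrite /qform mulmx_sumr mulmx_suml summxE. Qed.

Lemma qform_real A v : adjmx A = A -> (qform A v)^* = qform A v.
Proof. by move=> herm; rewrite /qform -adjmxE !adjmxM adjmxK herm mulmxA. Qed.

End InnerProduct.

Section PositiveSemidefinite.
Variables (C : numClosedFieldType) (n : nat).
Implicit Types (v : 'cV[C]_n) (A : 'M[C]_n).

Lemma qform_sum_outer (I : finType) (w : I -> 'cV[C]_n) v :
  qform (\sum_i w i *m adjmx (w i)) v = \sum_i `|inner (w i) v| ^+ 2.
Proof.
by rewrite qform_sum; apply: eq_bigr => i _; rewrite qform_outer normCKC.
Qed.

Lemma mulmx_sum_outer (I : finType) (w : I -> 'cV[C]_n) v :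
  (\sum_i w i *m adjmx (w i)) *m v = \sum_i inner (w i) v *: w i.
Proof.
rewrite mulmx_suml; apply: eq_bigr => i _.
by rewrite -mulmxA adjmx_mul_cV mul_mx_scalar.
Qed.

Lemma psd_sum_outer_decomp A : psd A ->
  exists w : 'I_n -> 'cV[C]_n, A = \sum_k w k *m adjmx (w k) /\
     (forall i j, i != j -> adjmx (w i) *m w j = 0).
Proof.
move=> [hA hq].
have /orthomx_spectralP eA : A \is normalmx by apply/normalmxP; rewrite -adjmx_trmxC hA.
set P := spectralmx A in eA; set sp := spectral_diag A in eA.
have uP : P \is unitarymx := spectral_unitarymx A.
rewrite invmx_unitary // -adjmx_trmxC in eA.
pose u k := adjmx (row k P).
have inner_u k l : inner (u k) (u l) = (k == l)%:R.
  have /unitarymxP/matrixP/(_ k l) := uP; rewrite -adjmx_trmxC !mxE => <-.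
  by rewrite innerE; apply: eq_bigr => a _; rewrite !mxE conjCK.
have eA' : A = \sum_k sp 0 k *: (u k *m adjmx (u k)).
  rewrite eA; apply/matrixP => a b; rewrite mul_mx_diag summxE mxE.
  by apply: eq_bigr => k _; rewrite !mxE big_ord1 !mxE conjCK mulrCA mulrA.
have sp_ge0 k : 0 <= sp 0 k.
  have := hq (u k); rewrite -/(qform A (u k)) eA' qform_sum (bigD1 k) //= big1 ?addr0.
    by rewrite qformZ qform_outer inner_u eqxx conjC1 !mulr1.
  by move=> l lk; rewrite qformZ qform_outer inner_u (negbTE lk) conjC0 mul0r mulr0.
exists (fun k => sqrtC (sp 0 k) *: u k); split.
  rewrite eA'; apply: eq_bigr => k _.
  rewrite adjmxZ -scalemxAl -scalemxAr scalerA geC0_conj ?sqrtC_ge0 //.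
  by rewrite -expr2 sqrtCK.
move=> i j ij; rewrite adjmxZ -scalemxAl -scalemxAr adjmx_mul_cV inner_u (negbTE ij).
by rewrite raddf0 !scaler0.
Qed.

Lemma psd_qform_eq0 A v : psd A -> qform A v = 0 -> A *m v = 0.
Proof.
move=> /psd_sum_outer_decomp[w [-> _]]; rewrite qform_sum_outer mulmx_sum_outer.
move=> /(psumr_eq0P (fun k _ => exprn_ge0 2 (normr_ge0 _))) w0.
apply: big1 => k _; have /eqP := w0 k isT.
by rewrite sqrf_eq0 normr_eq0 => /eqP ->; rewrite scale0r.
Qed.

Lemma psd_convex_ker (A1 A2 : 'M[C]_n) t v :
  psd A1 -> psd A2 -> 0 < t < 1 -> (t *: A1 + (1 - t) *: A2) *m v = 0 -> A1 *m v = 0.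
Proof.
move=> p1 p2 /andP[t0 t1] Av; apply: psd_qform_eq0 => //.
have : qform (t *: A1 + (1 - t) *: A2) v = 0 by rewrite /qform -mulmxA Av mulmx0 mxE.
rewrite qformD !qformZ => /eqP; rewrite paddr_eq0.
- by case/andP => /eqP/eqP; rewrite mulf_eq0 (gt_eqF t0) => /eqP.
- by apply: mulr_ge0; [exact: ltW | exact: p1.2].
- by apply: mulr_ge0; [rewrite subr_ge0 ltW | exact: p2.2].
Qed.

End PositiveSemidefinite.

Lemma mulmx_cV_eq0 (R : pzRingType) p q (A : 'M[R]_(p, q)) :
  (forall v : 'cV[R]_q, A *m v = 0) -> A = 0.
Proof.
move=> A0; apply/matrixP => i j.
by have /matrixP/(_ i 0) := A0 (delta_mx j 0); rewrite -colE !mxE.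
Qed.

Lemma normM_le_sum_sqr (R : numDomainType) (I : finType) (f : I -> R) i j :
  `|f i| * `|f j| <= \sum_k `|f k| ^+ 2.
Proof.
have le_sum k : `|f k| ^+ 2 <= \sum_k `|f k| ^+ 2.
  by rewrite (bigD1 k) //= lerDl; apply: sumr_ge0 => *; exact: exprn_ge0.
case/orP: (ger_leVge (normr_ge0 (f i)) (normr_ge0 (f j))) => le_ij.
  by apply: le_trans (le_sum j); rewrite expr2 ler_wpM2r.
by apply: le_trans (le_sum i); rewrite expr2 mulrC ler_wpM2r.
Qed.

Section OrthogonalFamily.
Variables (C : numClosedFieldType) (n : nat) (I : finType) (w : I -> 'cV[C]_n).

Definition outer_comb (c : I -> I -> C) : 'M[C]_n :=
  \sum_i \sum_j c i j *: (w i *m adjmx (w j)).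

Lemma outer_comb_delta : outer_comb (fun i j => (i == j)%:R) = \sum_i w i *m adjmx (w i).
Proof.
apply: eq_bigr => i _; rewrite (bigD1 i) //= big1 ?addr0 => [|j ji].
  by rewrite eqxx scale1r.
by rewrite eq_sym (negbTE ji) scale0r.
Qed.

Lemma outer_combD c c' :
  outer_comb c + outer_comb c' = outer_comb (fun i j => c i j + c' i j).
Proof.
rewrite -big_split; apply: eq_bigr => i _; rewrite -big_split.
by apply: eq_bigr => j _; rewrite scalerDl.
Qed.

Lemma outer_combZ a c : a *: outer_comb c = outer_comb (fun i j => a * c i j).
Proof.
rewrite scaler_sumr; apply: eq_bigr => i _; rewrite scaler_sumr.
by apply: eq_bigr => j _; rewrite scalerA.
Qed.

Lemma outer_combB c c' :
  outer_comb c - outer_comb c' = outer_comb (fun i j => c i j - c' i j).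
Proof.
rewrite -sumrB; apply: eq_bigr => i _; rewrite -sumrB.
by apply: eq_bigr => j _; rewrite scalerBl.
Qed.

Lemma adjmx_outer_comb c : adjmx (outer_comb c) = outer_comb (fun i j => (c j i)^*).
Proof.
rewrite raddf_sum; under eq_bigr do rewrite raddf_sum.
rewrite exchange_big; apply: eq_bigr => i _; apply: eq_bigr => j _.
by rewrite /= adjmxZ adjmxM adjmxK.
Qed.

Lemma psd_sum_outer_perturb c s :
  (forall i j, (c i j)^* = c j i) -> s^* = s ->
  `|s| * (\sum_i \sum_j `|c i j|) <= 1 ->
  psd (\sum_i w i *m adjmx (w i) + s *: outer_comb c).
Proof.
move=> c_herm s_real s_small.
set X := _ + _.
have herm : adjmx X = X.
  rewrite raddfD /= adjmxZ s_real adjmx_outer_comb raddf_sum /=.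
  congr (_ + s *: _); last by apply: eq_bigr => i _; apply: eq_bigr => j _; rewrite c_herm.
  by apply: eq_bigr => i _; rewrite adjmxM adjmxK.
split=> // v.
pose z i := inner (w i) v; pose S := \sum_i `|z i| ^+ 2.
pose Q := \sum_i \sum_j c i j * ((z i)^* * z j).
have qformE : qform X v = S + s * Q.
  rewrite qformD qformZ qform_sum_outer qform_sum; congr (_ + s * _).
  apply: eq_bigr => i _; rewrite qform_sum; apply: eq_bigr => j _.
  by rewrite qformZ qform_outer.
have S_ge0 : 0 <= S by apply: sumr_ge0 => *; exact: exprn_ge0.
have Q_le : `|Q| <= (\sum_i \sum_j `|c i j|) * S.
  rewrite mulr_suml; apply: le_trans (ler_norm_sum _ _ _) _.
  apply: ler_sum => i _; rewrite mulr_suml.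
  apply: le_trans (ler_norm_sum _ _ _) _; apply: ler_sum => j _.
  by rewrite !normrM norm_conjC ler_wpM2l ?normM_le_sum_sqr.
have sQ_le : `|s * Q| <= S.
  rewrite normrM; apply: le_trans (_ : `|s| * ((\sum_i \sum_j `|c i j|) * S) <= S).
    by rewrite ler_wpM2l.
  by rewrite mulrA -[leRHS]mul1r ler_wpM2r.
have sQ_real : s * Q \is Num.real.
  have -> : s * Q = (S + s * Q) - S by rewrite addrC addKr.
  have /CrealP := qform_real v herm; rewrite qformE => SsQ_real.
  by rewrite rpredB // ger0_real.
by rewrite -/(qform X v) qformE addrC -[S]opprK subr_ge0 real_lerNnormlW.
Qed.

Definition span_proj : 'M[C]_n := \sum_i (inner (w i) (w i))^-1 *: (w i *m adjmx (w i)).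

Lemma adjmx_span_proj : adjmx span_proj = span_proj.
Proof.
rewrite raddf_sum; apply: eq_bigr => i _.
by rewrite /= adjmxZ adjmxM adjmxK fmorphV /= conj_inner.
Qed.

Lemma outer_comb_compress A : adjmx A = A -> A *m span_proj = A ->
  A = outer_comb (fun i j =>
        (inner (w i) (w i))^-1 * (inner (w j) (w j))^-1 * (adjmx (w i) *m A *m w j) 0 0).
Proof.
move=> A_herm AP.
have PA : span_proj *m A = A by rewrite -adjmx_span_proj -{1}A_herm -adjmxM AP.
rewrite -{1}AP -{1}PA /span_proj !mulmx_suml; apply: eq_bigr => i _.
rewrite mulmx_sumr; apply: eq_bigr => j _.
by rewrite -scalemxAr -!scalemxAl outer_sandwich !scalerA [_^-1 / _]mulrC.
Qed.

Hypothesis w_orth : forall i j, i != j -> adjmx (w i) *m w j = 0.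
Hypothesis w_neq0 : forall i, w i != 0.

Lemma inner_orth i j : i != j -> inner (w i) (w j) = 0.
Proof. by move=> ij; rewrite /inner w_orth // mxE. Qed.

Lemma outer_comb_sandwich c k l :
  (adjmx (w k) *m outer_comb c *m w l) 0 0 = c k l * (inner (w k) (w k) * inner (w l) (w l)).
Proof.
have term i j : (adjmx (w k) *m (c i j *: (w i *m adjmx (w j))) *m w l) 0 0
                = c i j * (inner (w k) (w i) * inner (w j) (w l)).
  by rewrite -scalemxAr -scalemxAl mxE inner_outer.
rewrite /outer_comb mulmx_sumr mulmx_suml summxE (bigD1 k) //= [X in _ + X]big1 ?addr0 => [|i ik].
  rewrite mulmx_sumr mulmx_suml summxE (bigD1 l) //= [X in _ + X]big1 ?addr0 => [|j jl].
    exact: term.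
  by rewrite term (inner_orth jl) !mulr0.
rewrite mulmx_sumr mulmx_suml summxE big1 // => j _.
by rewrite term inner_orth 1?eq_sym // mul0r mulr0.
Qed.

Lemma outer_comb_eq0 c : outer_comb c = 0 -> forall k l, c k l = 0.
Proof.
move=> c0 k l; have := outer_comb_sandwich c k l.
rewrite c0 mulmx0 mul0mx mxE => /esym/eqP.
by rewrite !mulf_eq0 !inner_eq0 !(negbTE (w_neq0 _)) !orbF => /eqP.
Qed.

Lemma sum_outer_span_proj :
  (\sum_i w i *m adjmx (w i)) *m span_proj = \sum_i w i *m adjmx (w i).
Proof.
rewrite mulmx_suml; apply: eq_bigr => i _; rewrite -mulmxA /span_proj mulmx_sumr.
rewrite (bigD1 i) //= big1 ?addr0 => [|j ji].
  rewrite -scalemxAr mulmxA adjmx_mul_cV mul_scalar_mx scalerA mulVf ?scale1r //.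
  by rewrite inner_eq0 w_neq0.
by rewrite -scalemxAr mulmxA w_orth 1?eq_sym // mul0mx scaler0.
Qed.

End OrthogonalFamily.

Section Seeds.
Variables (C : numClosedFieldType) (d m : nat) (I : finType) (w : I -> 'cV[C]_(d * m)).

Lemma ptrace_outer_comb c :
  ptrace_h (outer_comb w c) = \sum_(p : I * I) c p.1 p.2 *: (Wop (w p.1) *m adjmx (Wop (w p.2))).
Proof.
rewrite linear_sum -(pair_bigA _ (fun i j => c i j *: (Wop (w i) *m adjmx (Wop (w j))))).
apply: eq_bigr => i _; rewrite linear_sum; apply: eq_bigr => j _.
by rewrite linearZ /= ptrace_outer.
Qed.

Lemma extremal_perturb (X Y : 'M[C]_(d * m)) :
  extremal X -> seeds (X + Y) -> seeds (X - Y) -> Y = 0.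
Proof.
move=> [_ X_ext] sXY sXY'.
have half : 0 < (2^-1 : C) < 1 by rewrite invr_gt0 ltr0n invf_lt1 ?ltr0n // ltr1n.
have eX : X = 2^-1 *: (X + Y) + (1 - 2^-1) *: (X - Y).
  rewrite [X in X - _](splitr 1) mul1r addrK -scalerDr addrACA subrr addr0.
  by rewrite -mulr2n -scaler_nat scalerA mulVf ?pnatr_eq0 // scale1r.
have [XYX _] := X_ext _ _ _ sXY sXY' half eX.
by apply: (addrI X); rewrite XYX addr0.
Qed.

Hypothesis w_orth : forall i j, i != j -> adjmx (w i) *m w j = 0.
Hypothesis w_neq0 : forall i, w i != 0.

Lemma lin_indep_extremal (X : 'M[C]_(d * m)) :
  seeds X -> X = \sum_i w i *m adjmx (w i) ->
  lin_indep (fun p : I * I => Wop (w p.1) *m adjmx (Wop (w p.2))) -> extremal X.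
Proof.
move=> sX eX w_indep; split=> // X1 X2 t s1 s2 t01 eC.
have X1X : X1 = X.
  (* X1 is dominated by X / t, so it vanishes on ker X = ker (1 - span_proj w). *)
  have X1P : X1 *m span_proj w = X1.
    apply/eqP; rewrite -subr_eq0 -{2}(mulmx1 X1) -mulmxBr; apply/eqP/mulmx_cV_eq0 => v.
    rewrite -mulmxA (psd_convex_ker s1.1 s2.1 t01) // -eC mulmxA mulmxBr mulmx1.
    by rewrite eX sum_outer_span_proj // subrr mul0mx.
  have X1_herm : adjmx X1 = X1 := s1.1.1.
  pose c i j := (inner (w i) (w i))^-1 * (inner (w j) (w j))^-1 * (adjmx (w i) *m X1 *m w j) 0 0.
  have eX1 : X1 = outer_comb w c := outer_comb_compress X1_herm X1P.
  have dX : X1 - X = outer_comb w (fun i j => c i j - (i == j)%:R).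
    by rewrite eX {1}eX1 -outer_comb_delta outer_combB.
  have : ptrace_h (X1 - X) = 0 by rewrite linearB /= s1.2 sX.2 subrr.
  rewrite dX ptrace_outer_comb => /w_indep c0.
  apply/eqP; rewrite -subr_eq0 dX; apply/eqP/big1 => i _; apply/big1 => j _.
  by rewrite (c0 (i, j)) scale0r.
split=> //; apply/(scalerI (_ : 1 - t != 0)).
  by case/andP: t01 => _ t1; rewrite subr_eq0 eq_sym lt_eqF.
by apply: (addrI (t *: X)); rewrite -{1}X1X -eC -scalerDl addrC subrK scale1r.
Qed.

Lemma extremal_herm_outer_comb_eq0 X c :
  extremal X -> X = \sum_i w i *m adjmx (w i) -> (forall i j, (c i j)^* = c j i) ->
  ptrace_h (outer_comb w c) = 0 -> forall i j, c i j = 0.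
Proof.
move=> X_ext eX c_herm c_ptrace.
pose K := \sum_i \sum_j `|c i j|.
have K_ge0 : 0 <= K by apply: sumr_ge0 => i _; apply: sumr_ge0 => *; exact: normr_ge0.
pose e := (K + 1)^-1.
have e_gt0 : 0 < e by rewrite invr_gt0 ltr_wpDl.
have e_small : `|e| * K <= 1.
  by rewrite ger0_norm ?(ltW e_gt0) // /e mulrC ler_pdivrMr ?ltr_wpDl // mul1r lerDl ler01.
have seeds_perturb s : s^* = s -> `|s| * K <= 1 -> seeds (X + s *: outer_comb w c).
  split; first by rewrite eX; exact: psd_sum_outer_perturb.
  by rewrite linearD linearZ /= c_ptrace scaler0 addr0 X_ext.1.2.
have /eqP : e *: outer_comb w c = 0.
  apply: extremal_perturb X_ext (seeds_perturb e _ _) _ => //; first exact/CrealP/gtr0_real.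
  rewrite -scaleNr; apply: seeds_perturb; last by rewrite normrN.
  by rewrite rmorphN; congr (- _); exact/CrealP/gtr0_real.
by rewrite scaler_eq0 gt_eqF //= => /eqP; exact: outer_comb_eq0.
Qed.

Lemma extremal_outer_comb_eq0 X c :
  extremal X -> X = \sum_i w i *m adjmx (w i) ->
  ptrace_h (outer_comb w c) = 0 -> forall i j, c i j = 0.
Proof.
move=> X_ext eX c_ptrace.
(* c + c^+ and 'i (c - c^+) are hermitian, and both satisfy the trace condition. *)
pose ca i j := (c j i)^*.
have ca_ptrace : ptrace_h (outer_comb w ca) = 0.
  by rewrite -adjmx_outer_comb ptrace_adjmx c_ptrace raddf0.
have re : forall i j, c i j + ca i j = 0.
  apply: (extremal_herm_outer_comb_eq0 X_ext eX) => [i j|].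
    by rewrite /ca rmorphD /= conjCK addrC.
  by rewrite -outer_combD linearD /= c_ptrace ca_ptrace addr0.
have im : forall i j, 'i * (c i j - ca i j) = 0.
  apply: (extremal_herm_outer_comb_eq0 X_ext eX) => [i j|].
    by rewrite /ca rmorphM rmorphB /= conjCK conjCi mulNr -mulrN opprB.
  by rewrite -outer_combZ -outer_combB linearZ linearB /= c_ptrace ca_ptrace subrr scaler0.
move=> i j; move/eqP: (im i j); rewrite mulf_eq0 (negbTE (neq0Ci C)) subr_eq0 => /eqP c_ca.
by move/eqP: (re i j); rewrite -c_ca -mulr2n mulrn_eq0 => /eqP.
Qed.

Lemma extremal_lin_indep X :
  extremal X -> X = \sum_i w i *m adjmx (w i) ->
  lin_indep (fun p : I * I => Wop (w p.1) *m adjmx (Wop (w p.2))).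
Proof.
move=> X_ext eX c c0 [i j].
apply: (extremal_outer_comb_eq0 (c := fun i j => c (i, j)) X_ext eX).
by rewrite ptrace_outer_comb -[RHS]c0; apply: eq_bigr => -[].
Qed.

End Seeds.

Lemma lin_indep_card (C : numClosedFieldType) (I : finType) p q (F : I -> 'M[C]_(p, q)) :
  lin_indep F -> (#|I| <= p * q)%N.
Proof.
move=> F_indep; pose B := \matrix_(k < #|I|) mxvec (F (enum_val k)).
suff /eqP <- : row_free B by exact: rank_leq_col.
apply/inj_row_free => v vB; apply/rowP => k; rewrite mxE -(enum_valK k).
apply: (F_indep (fun j => v 0 (enum_rank j))); apply/eqP; rewrite -mxvec_eq0; apply/eqP.
rewrite linear_sum /= -[RHS]vB mulmx_sum_row (reindex (enum_val : 'I_#|I| -> I)) /=.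
  by apply: eq_bigr => k' _; rewrite enum_valK linearZ /= rowK.
by exists enum_rank => x _; rewrite ?enum_valK ?enum_rankK.
Qed.

Lemma mxrankD_le (F : fieldType) p q (A B : 'M[F]_(p, q)) :
  (\rank (A + B)%R <= \rank A + \rank B)%N.
Proof.
apply: leq_trans (mxrankS (addmx_sub_adds (submx_refl A) (submx_refl B))) _.
exact: (mxrank_adds_leqif A B).1.
Qed.

Lemma mxrank_sum_outer (C : numClosedFieldType) n (I : finType) (w : I -> 'cV[C]_n) :
  (\rank (\sum_i w i *m adjmx (w i))%R <= #|I|)%N.
Proof.
rewrite -sum1_card; apply: (big_ind2 (fun (A : 'M[C]_n) k => \rank A <= k)%N).
- by rewrite mxrank0.
- by move=> A x B y rA rB; exact: leq_trans (mxrankD_le A B) (leq_add rA rB).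
- by move=> i _; apply: leq_trans (mxrankM_maxl _ _) _; exact: rank_leq_col.
Qed.

Lemma extremal_rank (C : numClosedFieldType) d m (X : 'M[C]_(d * m)) :
  extremal X -> (\rank X <= m)%N.
Proof.
move=> X_ext; have [w [eX w_orth]] := psd_sum_outer_decomp X_ext.1.1.
pose J : {pred 'I_(d * m)} := [pred k | w k != 0].
pose w' (k : {k in J}) := w (val k).
have eX' : X = \sum_k w' k *m adjmx (w' k).
  rewrite -(big_sub J (fun i => w i *m adjmx (w i))) eX [LHS](bigID (mem J)) /=.
  rewrite [X in _ + X]big1 ?addr0 //.
  by move=> i; rewrite inE negbK => /eqP ->; rewrite mul0mx.
have w'_orth i j : i != j -> adjmx (w' i) *m w' j = 0 by move=> ij; apply: w_orth.
have w'_neq0 k : w' k != 0 by have := valP k; rewrite inE.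
have := lin_indep_card (extremal_lin_indep w'_orth w'_neq0 X_ext eX').
rewrite card_prod !mulnn leq_sqr => card_le.
by rewrite eX'; apply: leq_trans (mxrank_sum_outer w') card_le.
Qed.

Theorem theorem3 (C : numClosedFieldType) (d m : nat) (hd : (0 < d)%N) (hm : (0 < m)%N) :
  (forall (X : 'M[C]_(d * m)) (r : nat) (w : 'I_r -> 'cV[C]_(d * m)),
      seeds X ->
      X = \sum_(i < r) w i *m adjmx (w i) ->
      (forall i j, i != j -> adjmx (w i) *m w j = 0) ->
      (forall i, w i != 0) ->
      r = \rank X ->
      (extremal X <->
       lin_indep (fun ij : 'I_r * 'I_r => Wop (w ij.1) *m adjmx (Wop (w ij.2)))))
  /\
  (forall X : 'M[C]_(d * m), extremal X -> (\rank X <= m)%N).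
Proof.
split=> [X r w sX eX w_orth w_neq0 _|]; last exact: extremal_rank.
split=> [X_ext | w_indep]; first exact: extremal_lin_indep X_ext eX.
exact: lin_indep_extremal sX eX w_indep.
Qed.
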